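(* Consider the multi-agent setting, the problems $\mathrm{FTOCP}^{(m)}_k(\hat N)$ and the CMC procedure described in the context, with all agents $m=1,\dots,M$ operating in closed loop under the CMC procedure. If at time $k=0$ the CMC procedure succeeds for every agent, then the CMC procedure succeeds for every agent at every time $k=1,2,3,\dots$ (recursive feasibility).
   Context: Setting. Let $\Delta t>0$, $\bar a>0$, $\bar v>0$, $\rho>0$, integers $M\ge 2$ and $N\ge1$, and $\tilde N:=\lceil \bar v/(\bar a\Delta t)\rceil$ with $\tilde N\le N-1$ ($\lceil r\rceil$ = smallest integer $\ge r$). Each agent $m=1,\dots,M$ has state $\mathbf{s}^{(m)}_k=(\mathbf{p}^{(m)}_k,\mathbf{v}^{(m)}_k)\in\mathbb{R}^3\times\mathbb{R}^3$ (position, velocity) and input $\mathbf{a}^{(m)}_k\in\mathbb{R}^3$, with exact, disturbance-free dynamics $\mathbf{s}_{k+1}=\mathbf{A}\mathbf{s}_k+\mathbf{B}\mathbf{a}_k$, where $\mathbf{A}=\begin{bmatrix}I_3&\Delta t I_3\\0&I_3\end{bmatrix}$, $\mathbf{B}=\begin{bmatrix}\tfrac{(\Delta t)^2}{2}I_3\\ \Delta t I_3\end{bmatrix}$; initial velocities satisfy $\|\mathbf{v}^{(m)}_0\|_2\le\bar v$. Each agent is a ball of radius $\rho$ centred at its position. Each agent $m$ has a position constraint set $\mathbb{S}^{(m)}\subseteq\mathbb{R}^3$ and a cost function $J^{(m)}$ of its nominal inputs and states; whenever an FTOCP below is feasible it is assumed to have an optimal solution (denoted by a star). All agents share a synchronized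 clock, measure all agents' states exactly, and do not communicate. Reference contingency plan. For a state $(\mathbf{p},\mathbf{v})$ let $n=\lceil\|\mathbf{v}\|_2/(\bar a\Delta t)\rceil$. The reference contingency trajectory starts at $(\mathbf{p},\mathbf{v})$ and applies the input $-\mathbf{v}/(n\Delta t)$ for steps $0,\dots,n-1$ and $\mathbf{0}$ afterwards (if $n=0$ the agent stays at $\mathbf{p}$). Denote by $\mathbf{r}^{(j)}_{i|k}$, $i=0,1,2,\dots$, the positions of the reference contingency trajectory computed from $\mathbf{s}^{(j)}_k$. Collision-avoidance constraint of agent $m$ w.r.t. agent $j\ne m$ at step $i$: with $d^{(j,m)}_{i|k}=\|\mathbf{r}^{(j)}_{i|k}-\mathbf{r}^{(m)}_{i|k}\|_2$, $\mathbf{g}^{(j,m)}_{i|k}=(\mathbf{r}^{(j)}_{i|k}-\mathbf{r}^{(m)}_{i|k})/d^{(j,m)}_{i|k}$ and $h^{(j,m)}_{i|k}=\mathbf{g}^{(j,m)\mathrm T}_{i|k}\mathbf{r}^{(m)}_{i|k}+\tfrac12 d^{(j,m)}_{i|k}-\rho$, a point $\mathbf{q}\in\mathbb{R}^3$ satisfies it iff $\mathbf{g}^{(j,m)\mathrm T}_{i|k}\mathbf{q}\le h^{(j,m)}_{i|k}$. (The FTOCP is well defined only when all these $d^{(j,m)}_{i|k}$ are nonzero.) $\mathrm{FTOCP}^{(m)}_k(\hat N)$, for an integer $\hat N\ge0$: minimize $J^{(m)}$ over $\mathbf{a}^{(m)}_{0|k},\dots,\mathbf{a}^{(m)}_{N-1|k}$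 subject to: nominal states $\mathbf{s}^{(m)}_{0|k}=\mathbf{s}^{(m)}_k$, $\mathbf{s}^{(m)}_{i+1|k}=\mathbf{A}\mathbf{s}^{(m)}_{i|k}+\mathbf{B}\mathbf{a}^{(m)}_{i|k}$; $\|\mathbf{a}^{(m)}_{i|k}\|_2\le\bar a$ for $i=0,\dots,N-1$; the position of $\mathbf{s}^{(m)}_{i|k}$ lies in $\mathbb{S}^{(m)}$ for $i=1,\dots,N$; contingency states $\tilde{\mathbf{s}}^{(m)}_{1|k}=\mathbf{s}^{(m)}_{1|k}$, and, writing $\mathbf{v}^{(m)}_{1|k}$ for the velocity of $\mathbf{s}^{(m)}_{1|k}$, contingency inputs $\tilde{\mathbf{a}}^{(m)}_{i|k}=-\mathbf{v}^{(m)}_{1|k}/(\hat N\Delta t)$ and $\tilde{\mathbf{s}}^{(m)}_{i+1|k}=\mathbf{A}\tilde{\mathbf{s}}^{(m)}_{i|k}+\mathbf{B}\tilde{\mathbf{a}}^{(m)}_{i|k}$ for $i=1,\dots,\hat N$, and $\tilde{\mathbf{s}}^{(m)}_{i|k}=\tilde{\mathbf{s}}^{(m)}_{\hat N+1|k}$ for $\hat N+1<i\le N$; the position of $\tilde{\mathbf{s}}^{(m)}_{i|k}$ lies in $\mathbb{S}^{(m)}$ for $i=2,\dots,\hat N+1$; and for every $j\ne m$ and every $i=1,\dots,N$ the position of $\tilde{\mathbf{s}}^{(m)}_{i|k}$ satisfies the collision-avoidance constraint of agent $m$ w.r.t. $j$ at step $i$. CMC procedure of agent $m$ at time $k$. Let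 $\tilde N^{(m)}_k=\lceil\|\mathbf{v}^{(m)}_k\|_2/(\bar a\Delta t)\rceil$. Call a solution valid if its $\mathbf{v}^{(m)\star}_{1|k}$ satisfies $\lceil\|\mathbf{v}^{(m)\star}_{1|k}\|_2/(\bar a\Delta t)\rceil=\hat N$. (a) If $\tilde N^{(m)}_k<\tilde N$, solve $\mathrm{FTOCP}^{(m)}_k(\tilde N^{(m)}_k+1)$; if it is feasible and its optimal solution is valid, apply $\mathbf{a}^{(m)\star}_{0|k}$ and stop. (b) Otherwise solve $\mathrm{FTOCP}^{(m)}_k(\tilde N^{(m)}_k)$ with the additional constraint $\|\mathbf{v}^{(m)}_{1|k}\|_2\le\bar a\tilde N^{(m)}_k\Delta t$; if it is feasible and its optimal solution is valid, apply $\mathbf{a}^{(m)\star}_{0|k}$ and stop. (c) Otherwise (this step exists only when $\tilde N^{(m)}_k\ge1$) solve $\mathrm{FTOCP}^{(m)}_k(\tilde N^{(m)}_k-1)$ with the additional constraint $\|\mathbf{v}^{(m)}_{1|k}\|_2\le\bar a(\tilde N^{(m)}_k-1)\Delta t$ and apply $\mathbf{a}^{(m)\star}_{0|k}$. The procedure succeeds at time $k$ if it applies an input, i.e. if step (a) or (b) produces a valid optimal solution or the FTOCP in step (c) is (well defined and) feasible. In closed loop, $\mathbf{s}^{(m)}_{k+1}=\mathbf{A}\mathbf{s}^{(m)}_k+\mathbf{B}\mathbf{a}^{(m)\star}_{0|k}$ for every agent. *)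

From Stdlib Require Import Reals Lra Lia ZArith.
Open Scope R_scope.

Record V3 := mkV3 { vx : R; vy : R; vz : R }.
Definition v3zero : V3 := mkV3 0 0 0.
Definition v3add (a b : V3) : V3 := mkV3 (vx a + vx b) (vy a + vy b) (vz a + vz b).
Definition v3sub (a b : V3) : V3 := mkV3 (vx a - vx b) (vy a - vy b) (vz a - vz b).
Definition v3scale (c : R) (a : V3) : V3 := mkV3 (c * vx a) (c * vy a) (c * vz a).
Definition v3dot (a b : V3) : R := vx a * vx b + vy a * vy b + vz a * vz b.
Definition v3norm (a : V3) : R := sqrt (v3dot a a).

Record St := mkSt { pos : V3; vel : V3 }.

(** ceiling: smallest integer >= r (as a nat; only applied to r >= 0).
    [up x] is the unique integer with x < up x <= x + 1, so
    floor x = up x - 1 and ceil r = - floor (- r) = 1 - up (- r). *)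
Definition ceil_nat (r : R) : nat := Z.to_nat (1 - up (- r))%Z.

Record Params := mkParams {
  dt : R;
  abar : R;    (* acceleration bound *)
  vbar : R;    (* velocity bound *)
  rho : R;     (* agent radius *)
  nagents : nat;  (* M; agents are indexed 0 .. M-1 *)
  hor : nat
}.

Definition Ntil (P : Params) : nat := ceil_nat (vbar P / (abar P * dt P)).

Definition params_ok (P : Params) : Prop :=
  0 < dt P /\ 0 < abar P /\ 0 < vbar P /\ 0 < rho P /\
  (2 <= nagents P)%nat /\ (1 <= hor P)%nat /\ (Ntil P <= hor P - 1)%nat.

(** Dynamics s_{+} = A s + B a with A = [[I, dt I],[0, I]], B = [[dt^2/2 I],[dt I]]. *)
Definition dyn (P : Params) (s : St) (a : V3) : St :=
  mkSt (v3add (v3add (pos s) (v3scale (dt P) (vel s))) (v3scale (dt P ^ 2 / 2) a))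
       (v3add (vel s) (v3scale (dt P) a)).

Fixpoint traj (P : Params) (u : nat -> V3) (s : St) (i : nat) : St :=
  match i with
  | O => s
  | S i' => dyn P (traj P u s i') (u i')
  end.

Definition ref_n (P : Params) (s : St) : nat :=
  ceil_nat (v3norm (vel s) / (abar P * dt P)).

Definition ref_input (P : Params) (s : St) : nat -> V3 :=
  fun t => if (t <? ref_n P s)%nat
           then v3scale (- / (INR (ref_n P s) * dt P)) (vel s)
           else v3zero.

Definition ref_pos (P : Params) (s : St) (i : nat) : V3 :=
  pos (traj P (ref_input P s) s i).

Definition dist_jm (P : Params) (sj sm : St) (i : nat) : R :=
  v3norm (v3sub (ref_pos P sj i) (ref_pos P sm i)).

Definition ca_constraint (P : Params) (sj sm : St) (i : nat) (q : V3) : Prop :=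
  let rj := ref_pos P sj i in
  let rm := ref_pos P sm i in
  let d := dist_jm P sj sm i in
  let g := v3scale (/ d) (v3sub rj rm) in
  v3dot g q <= v3dot g rm + d / 2 - rho P.

(** * FTOCP^{(m)}_k(Nhat)
    X j is the (measured) state of agent j at the current time k;
    u i = a^{(m)}_{i|k}; vb is the optional additional constraint
    ||v^{(m)}_{1|k}|| <= b. *)

Definition nom (P : Params) (X : nat -> St) (m : nat) (u : nat -> V3) (i : nat) : St :=
  traj P u (X m) i.

(** contingency state s~^{(m)}_{i|k}, for i >= 1 *)
Definition cont (P : Params) (X : nat -> St) (m Nhat : nat) (u : nat -> V3)
  (i : nat) : St :=
  let s1 := nom P X m u 1 in
  let ac := v3scale (- / (INR Nhat * dt P)) (vel s1) in
  traj P (fun _ => ac) s1 (Nat.min (i - 1) Nhat).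

(** well-definedness: all d^{(j,m)}_{i|k} nonzero *)
Definition ftocp_wd (P : Params) (X : nat -> St) (m : nat) : Prop :=
  forall j i, (j < nagents P)%nat -> j <> m -> (1 <= i <= hor P)%nat ->
    dist_jm P (X j) (X m) i <> 0.

Definition ftocp_constr (P : Params) (Sset : nat -> V3 -> Prop) (X : nat -> St)
  (m Nhat : nat) (vb : option R) (u : nat -> V3) : Prop :=
  (forall i, (i < hor P)%nat -> v3norm (u i) <= abar P) /\
  (forall i, (1 <= i <= hor P)%nat -> Sset m (pos (nom P X m u i))) /\
  (forall i, (2 <= i <= Nhat + 1)%nat -> Sset m (pos (cont P X m Nhat u i))) /\
  (forall j i, (j < nagents P)%nat -> j <> m -> (1 <= i <= hor P)%nat ->
      ca_constraint P (X j) (X m) i (pos (cont P X m Nhat u i))) /\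
  (match vb with
   | Some b => v3norm (vel (nom P X m u 1)) <= b
   | None => True
   end).

Definition ftocp_feasible (P : Params) (Sset : nat -> V3 -> Prop) (X : nat -> St)
  (m Nhat : nat) (vb : option R) : Prop :=
  ftocp_wd P X m /\ exists u, ftocp_constr P Sset X m Nhat vb u.

(** truncation so that the cost only sees the finitely many decision data *)
Definition trunc {A : Type} (d : A) (n : nat) (f : nat -> A) : nat -> A :=
  fun i => if (i <? n)%nat then f i else d.

Definition ftocp_cost (P : Params) (J : nat -> (nat -> V3) -> (nat -> St) -> R)
  (X : nat -> St) (m : nat) (u : nat -> V3) : R :=
  J m (trunc v3zero (hor P) u)
      (trunc (mkSt v3zero v3zero) (hor P + 1) (nom P X m u)).

Definition ftocp_optimal (P : Params) (Sset : nat -> V3 -> Prop)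
  (J : nat -> (nat -> V3) -> (nat -> St) -> R) (X : nat -> St)
  (m Nhat : nat) (vb : option R) (u : nat -> V3) : Prop :=
  ftocp_wd P X m /\ ftocp_constr P Sset X m Nhat vb u /\
  forall u', ftocp_constr P Sset X m Nhat vb u' ->
    ftocp_cost P J X m u <= ftocp_cost P J X m u'.

Inductive Step := StepA | StepB | StepC.

Definition Nt (P : Params) (X : nat -> St) (m : nat) : nat :=
  ceil_nat (v3norm (vel (X m)) / (abar P * dt P)).

Definition step_Nhat (P : Params) (X : nat -> St) (m : nat) (st : Step) : nat :=
  match st with
  | StepA => (Nt P X m + 1)%nat
  | StepB => Nt P X m
  | StepC => (Nt P X m - 1)%nat
  end.

Definition step_vb (P : Params) (X : nat -> St) (m : nat) (st : Step) : option R :=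
  match st with
  | StepA => None
  | StepB => Some (abar P * INR (Nt P X m) * dt P)
  | StepC => Some (abar P * INR (Nt P X m - 1) * dt P)
  end.

Definition step_feasible P Sset X m st : Prop :=
  ftocp_feasible P Sset X m (step_Nhat P X m st) (step_vb P X m st).

Definition valid (P : Params) (X : nat -> St) (m Nhat : nat) (u : nat -> V3) : Prop :=
  ceil_nat (v3norm (vel (nom P X m u 1)) / (abar P * dt P)) = Nhat.

(** [sel st] is the optimal solution returned by the solver for the FTOCP
    of step [st]; the solver specification: whenever the FTOCP of a step the
    procedure may reach is feasible, the returned solution is optimal. *)
Definition solver_ok (P : Params) (Sset : nat -> V3 -> Prop)
  (J : nat -> (nat -> V3) -> (nat -> St) -> R) (X : nat -> St) (m : nat)
  (sel : Step -> nat -> V3) : Prop :=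
  ((Nt P X m < Ntil P)%nat -> step_feasible P Sset X m StepA ->
     ftocp_optimal P Sset J X m (step_Nhat P X m StepA) (step_vb P X m StepA) (sel StepA)) /\
  (step_feasible P Sset X m StepB ->
     ftocp_optimal P Sset J X m (step_Nhat P X m StepB) (step_vb P X m StepB) (sel StepB)) /\
  ((1 <= Nt P X m)%nat -> step_feasible P Sset X m StepC ->
     ftocp_optimal P Sset J X m (step_Nhat P X m StepC) (step_vb P X m StepC) (sel StepC)).

Definition caseA P Sset X m (sel : Step -> nat -> V3) : Prop :=
  (Nt P X m < Ntil P)%nat /\ step_feasible P Sset X m StepA /\
  valid P X m (step_Nhat P X m StepA) (sel StepA).

Definition caseB P Sset X m (sel : Step -> nat -> V3) : Prop :=
  ~ caseA P Sset X m sel /\ step_feasible P Sset X m StepB /\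
  valid P X m (step_Nhat P X m StepB) (sel StepB).

Definition caseC P Sset X m (sel : Step -> nat -> V3) : Prop :=
  ~ caseA P Sset X m sel /\ ~ caseB P Sset X m sel /\
  (1 <= Nt P X m)%nat /\ step_feasible P Sset X m StepC.

Definition cmc_applies (P : Params) (Sset : nat -> V3 -> Prop) (X : nat -> St)
  (m : nat) (sel : Step -> nat -> V3) (a0 : V3) : Prop :=
  (caseA P Sset X m sel /\ a0 = sel StepA 0%nat) \/
  (caseB P Sset X m sel /\ a0 = sel StepB 0%nat) \/
  (caseC P Sset X m sel /\ a0 = sel StepC 0%nat).

Definition cmc_succeeds (P : Params) (Sset : nat -> V3 -> Prop) (X : nat -> St)
  (m : nat) (sel : Step -> nat -> V3) : Prop :=
  exists a0, cmc_applies P Sset X m sel a0.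

(* When agent [j] applies the first input of an FTOCP solution whose
   contingency plan brakes in [n] steps, and that solution is valid, the
   reference contingency plan of its new state is exactly the tail of that
   contingency plan.  The collision-avoidance constraints of two agents put
   their contingency positions in half-spaces [2 rho] apart, so at the next
   time all reference plans are pairwise [2 rho]-separated.  Hence the
   reference plan itself is feasible for the FTOCP of step (c) (of step (b)
   if the agent is at rest), and the procedure succeeds; the solution of
   step (c) is valid because one step changes the speed by at most
   [abar dt]. *)

From Pilot Require Import Defs.
From Stdlib Require Import Reals Lra Lia ZArith Classical.
Open Scope R_scope.

Lemma V3_ext (a b : V3) : vx a = vx b -> vy a = vy b -> vz a = vz b -> a = b.
Proof. destruct a, b; simpl; intros; subst; reflexivity. Qed.

Lemma St_ext (a b : St) : Defs.pos a = Defs.pos b -> vel a = vel b -> a = b.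
Proof. destruct a, b; simpl; intros; subst; reflexivity. Qed.

Lemma v3dot_self_ge0 (a : V3) : 0 <= v3dot a a.
Proof. unfold v3dot; nra. Qed.

Lemma v3norm_ge0 (a : V3) : 0 <= v3norm a.
Proof. apply sqrt_pos. Qed.

Lemma v3norm_sq (a : V3) : v3norm a * v3norm a = v3dot a a.
Proof. apply sqrt_sqrt, v3dot_self_ge0. Qed.

Lemma v3norm_le_of_sq (a : V3) (r : R) : 0 <= r -> v3dot a a <= r * r -> v3norm a <= r.
Proof.
  intros Hr Ha. apply Rsqr_incr_0_var; [|exact Hr].
  unfold Rsqr. now rewrite v3norm_sq.
Qed.

Lemma v3norm_zero : v3norm v3zero = 0.
Proof.
  unfold v3norm, v3dot; simpl. replace (0 * 0 + 0 * 0 + 0 * 0) with 0 by ring.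
  apply sqrt_0.
Qed.

Lemma v3norm_eq0 (a : V3) : v3norm a <= 0 -> a = v3zero.
Proof.
  intro Ha. pose proof (v3norm_sq a) as Hsq. pose proof (v3norm_ge0 a).
  destruct a as [x y z]; unfold v3dot in Hsq; simpl in Hsq.
  apply V3_ext; simpl; nra.
Qed.

Lemma v3norm_scale (c : R) (a : V3) : v3norm (v3scale c a) = Rabs c * v3norm a.
Proof.
  unfold v3norm.
  replace (v3dot (v3scale c a) (v3scale c a)) with (Rsqr c * v3dot a a)
    by (unfold v3dot, v3scale, Rsqr; simpl; ring).
  rewrite sqrt_mult by (apply Rle_0_sqr || apply v3dot_self_ge0).
  now rewrite sqrt_Rsqr_abs.
Qed.

Lemma v3dot_sq_le (a b : V3) : v3dot a b * v3dot a b <= v3dot a a * v3dot b b.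
Proof.
  destruct a as [a1 a2 a3], b as [b1 b2 b3]; unfold v3dot; simpl.
  (* Lagrange's identity: the gap is the squared norm of the cross product. *)
  pose proof (Rle_0_sqr (a1 * b2 - a2 * b1)); pose proof (Rle_0_sqr (a1 * b3 - a3 * b1));
  pose proof (Rle_0_sqr (a2 * b3 - a3 * b2)); unfold Rsqr in *; nra.
Qed.

Lemma v3dot_le_norm (a b : V3) : v3dot a b <= v3norm a * v3norm b.
Proof.
  pose proof (v3norm_ge0 a); pose proof (v3norm_ge0 b).
  destruct (Rle_or_lt (v3dot a b) 0); [nra|].
  apply Rsqr_incr_0_var; [|nra]. unfold Rsqr.
  replace (v3norm a * v3norm b * (v3norm a * v3norm b))
    with ((v3norm a * v3norm a) * (v3norm b * v3norm b)) by ring.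
  rewrite !v3norm_sq. apply v3dot_sq_le.
Qed.

Lemma v3norm_add_le (a b : V3) : v3norm (v3add a b) <= v3norm a + v3norm b.
Proof.
  pose proof (v3norm_ge0 a); pose proof (v3norm_ge0 b).
  pose proof (v3dot_le_norm a b); pose proof (v3norm_sq a); pose proof (v3norm_sq b).
  apply v3norm_le_of_sq; [lra|].
  replace (v3dot (v3add a b) (v3add a b)) with (v3dot a a + 2 * v3dot a b + v3dot b b)
    by (destruct a, b; unfold v3dot, v3add; simpl; ring).
  nra.
Qed.

Lemma v3dot_scale_l (c : R) (a b : V3) : v3dot (v3scale c a) b = c * v3dot a b.
Proof. unfold v3dot, v3scale; simpl; ring. Qed.

Lemma v3dot_sub_r (a b c : V3) : v3dot a (v3sub b c) = v3dot a b - v3dot a c.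
Proof. unfold v3dot, v3sub; simpl; ring. Qed.

Lemma v3sub_swap (a b : V3) : v3sub b a = v3scale (-1) (v3sub a b).
Proof. unfold v3sub, v3scale; apply V3_ext; simpl; ring. Qed.

Lemma v3norm_opp (a : V3) : v3norm (v3scale (-1) a) = v3norm a.
Proof. rewrite v3norm_scale, Rabs_left by lra; ring. Qed.

(* Each agent keeps to its side of the perpendicular bisector of the two
   reference points, shrunk by [rho]; the two half-spaces are [2 rho] apart. *)
Lemma halfspaces_separate (rj rm qj qm : V3) (rho : R) :
  let d := v3norm (v3sub rj rm) in
  let d' := v3norm (v3sub rm rj) in
  d <> 0 ->
  v3dot (v3scale (/ d) (v3sub rj rm)) qm <= v3dot (v3scale (/ d) (v3sub rj rm)) rm + d / 2 - rho ->
  v3dot (v3scale (/ d') (v3sub rm rj)) qj <= v3dot (v3scale (/ d') (v3sub rm rj)) rj + d' / 2 - rho ->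
  2 * rho <= v3norm (v3sub qj qm).
Proof.
  intros d d' Hd Cm Cj. unfold d' in Cj.
  rewrite v3sub_swap, v3norm_opp in Cj. fold d in Cj.
  set (w := v3sub rj rm) in *.
  rewrite !v3dot_scale_l in Cm; rewrite !v3dot_scale_l in Cj.
  assert (Hd0 : 0 < d) by (pose proof (v3norm_ge0 w); fold d in H; lra).
  assert (Hww : v3dot w rj - v3dot w rm = d * d)
    by (rewrite <- v3dot_sub_r; unfold d; now rewrite v3norm_sq).
  pose proof (v3dot_le_norm w (v3sub qj qm)) as CS. fold d in CS.
  rewrite v3dot_sub_r in CS.
  assert (Hcancel : forall x, d * (/ d * x) = x) by (intro; field; lra).
  assert (Cm' : v3dot w qm <= v3dot w rm + d * (d / 2 - rho)).
  { rewrite <- (Hcancel (v3dot w qm)), <- (Hcancel (v3dot w rm)), <- Rmult_plus_distr_l.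
    apply Rmult_le_compat_l; lra. }
  assert (Cj' : -1 * v3dot w qj <= -1 * v3dot w rj + d * (d / 2 - rho)).
  { rewrite <- (Hcancel (-1 * v3dot w qj)), <- (Hcancel (-1 * v3dot w rj)),
      <- Rmult_plus_distr_l.
    apply Rmult_le_compat_l; lra. }
  nra.
Qed.

Lemma ceil_nat_spec (x : R) : 0 <= x -> x <= INR (ceil_nat x) < x + 1.
Proof.
  intro Hx. unfold ceil_nat.
  destruct (archimed (- x)) as [Hup1 Hup2].
  assert (Hz : (0 <= 1 - up (- x))%Z).
  { apply le_IZR. rewrite minus_IZR. simpl. lra. }
  rewrite INR_IZR_INZ, Z2Nat.id by exact Hz.
  rewrite minus_IZR. simpl. lra.
Qed.

Lemma ceil_nat_unique (x : R) (n : nat) : INR n - 1 < x <= INR n -> ceil_nat x = n.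
Proof.
  intros Hn. unfold ceil_nat.
  replace (up (- x)) with (1 - Z.of_nat n)%Z.
  - replace (1 - (1 - Z.of_nat n))%Z with (Z.of_nat n) by lia. apply Nat2Z.id.
  - apply tech_up; rewrite minus_IZR, <- INR_IZR_INZ; simpl; lra.
Qed.

Lemma ceil_nat_div_spec (x c : R) : 0 <= x -> 0 < c ->
  (INR (ceil_nat (x / c)) - 1) * c < x <= INR (ceil_nat (x / c)) * c.
Proof.
  intros Hx Hc.
  assert (Hxc : x / c * c = x) by (field; lra).
  assert (0 <= x / c) by (apply Rle_mult_inv_pos; lra).
  pose proof (ceil_nat_spec (x / c)). nra.
Qed.

Lemma ceil_nat_div_unique (x c : R) (n : nat) : 0 < c ->
  (INR n - 1) * c < x <= INR n * c -> ceil_nat (x / c) = n.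
Proof.
  intros Hc Hn. apply ceil_nat_unique.
  assert (Hxc : x / c * c = x) by (field; lra). nra.
Qed.

Lemma ceil_nat_le (x y : R) : 0 <= x -> x <= y -> (ceil_nat x <= ceil_nat y)%nat.
Proof.
  intros Hx Hxy.
  pose proof (ceil_nat_spec x Hx); pose proof (ceil_nat_spec y ltac:(lra)).
  apply Nat.lt_succ_r, INR_lt. rewrite S_INR. lra.
Qed.

Lemma ceil_nat_div_pred (x y c : R) : 0 <= x -> 0 < c -> x <= y + c ->
  (1 <= ceil_nat (x / c))%nat -> y <= INR (ceil_nat (x / c) - 1) * c ->
  ceil_nat (y / c) = (ceil_nat (x / c) - 1)%nat.
Proof.
  intros Hx Hc Hxy Hn Hy. pose proof (ceil_nat_div_spec x c Hx Hc).
  apply ceil_nat_div_unique; [exact Hc|].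
  rewrite minus_INR in * by exact Hn. simpl INR in *. nra.
Qed.

Section Dynamics.

Variable P : Params.

Lemma traj_ext (u u' : nat -> V3) (s : St) (i : nat) :
  (forall t, (t < i)%nat -> u t = u' t) -> traj P u s i = traj P u' s i.
Proof.
  induction i as [|i IH]; intros Hu; simpl; [reflexivity|].
  rewrite IH, Hu by (intros; try apply Hu; lia). reflexivity.
Qed.

Lemma traj_succ_l (u : nat -> V3) (s : St) (i : nat) :
  traj P u s (S i) = traj P (fun t => u (S t)) (dyn P s (u 0%nat)) i.
Proof. induction i as [|i IH]; simpl in *; [reflexivity|]. now rewrite IH. Qed.

Lemma dyn_rest (s : St) : vel s = v3zero -> dyn P s v3zero = s.
Proof.
  destruct s as [[x y z] v]; simpl; intros ->.
  unfold dyn, v3add, v3scale, v3zero; simpl.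
  apply St_ext; apply V3_ext; simpl; ring.
Qed.

Lemma traj_rest (u : nat -> V3) (s : St) (n d : nat) :
  (forall t, (n <= t)%nat -> u t = v3zero) -> vel (traj P u s n) = v3zero ->
  traj P u s (n + d) = traj P u s n.
Proof.
  intros Hu Hv. induction d as [|d IH]; [now rewrite Nat.add_0_r|].
  rewrite Nat.add_succ_r. simpl. rewrite IH, Hu by lia. now apply dyn_rest.
Qed.

Lemma vel_traj_const (w : V3) (s : St) (i : nat) :
  vel (traj P (fun _ => w) s i) = v3add (vel s) (v3scale (INR i * dt P) w).
Proof.
  induction i as [|i IH]; simpl traj; [|unfold dyn; simpl vel; rewrite IH, S_INR];
    destruct (vel s), w; unfold v3add, v3scale; apply V3_ext; simpl; ring.
Qed.

End Dynamics.

Definition brake_input (P : Params) (s : St) (n : nat) : V3 :=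
  v3scale (- / (INR n * dt P)) (vel s).

(* For [n = 0] the input divides by zero, but it is applied zero times. *)
Definition brake (P : Params) (s : St) (n i : nat) : St :=
  traj P (fun _ => brake_input P s n) s (Nat.min i n).

Lemma cont_brake (P : Params) (X : nat -> St) (m n : nat) (u : nat -> V3) (i : nat) :
  cont P X m n u i = brake P (nom P X m u 1) n (i - 1).
Proof. reflexivity. Qed.

Section Braking.

Variable P : Params.
Hypothesis Hdt : 0 < dt P.
Hypothesis Habar : 0 < abar P.

Lemma vel_dyn_brake (s : St) (n : nat) : n <> 0%nat ->
  vel (dyn P s (brake_input P s n)) = v3scale ((INR n - 1) / INR n) (vel s).
Proof.
  intro Hn. assert (INR n <> 0) by now apply not_0_INR.
  unfold dyn, brake_input; simpl.
  destruct (vel s); unfold v3add, v3scale; apply V3_ext; simpl; field; lra.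
Qed.

Lemma brake_stops (s : St) (n : nat) : n <> 0%nat ->
  vel (traj P (fun _ => brake_input P s n) s n) = v3zero.
Proof.
  intro Hn. assert (INR n <> 0) by now apply not_0_INR.
  rewrite vel_traj_const. unfold brake_input.
  destruct (vel s); unfold v3add, v3scale, v3zero; apply V3_ext; simpl; field; lra.
Qed.

Lemma brake_succ (s : St) (n i : nat) : (1 <= n)%nat ->
  brake P s n (S i) = brake P (dyn P s (brake_input P s n)) (n - 1) i.
Proof.
  intro Hn. unfold brake.
  replace (Nat.min (S i) n) with (S (Nat.min i (n - 1))) by lia.
  rewrite traj_succ_l.
  destruct (Nat.eq_dec n 1) as [->|Hn1].
  - now replace (Nat.min i (1 - 1)) with 0%nat by lia.
  - (* after one step the velocity is [(n-1)/n] times smaller, so braking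
       from there in [n - 1] steps uses the same input *)
    replace (brake_input P (dyn P s (brake_input P s n)) (n - 1))
      with (brake_input P s n); [reflexivity|].
    unfold brake_input at 2. rewrite vel_dyn_brake by lia.
    assert (INR n <> 0) by (apply not_0_INR; lia).
    assert (INR (n - 1) <> 0) by (apply not_0_INR; lia).
    rewrite minus_INR in * by lia. simpl INR in *.
    unfold brake_input; destruct (vel s); unfold v3scale; apply V3_ext; simpl; field; lra.
Qed.

Lemma ref_n_spec (s : St) :
  (INR (ref_n P s) - 1) * (abar P * dt P) < v3norm (vel s) <= INR (ref_n P s) * (abar P * dt P).
Proof. apply ceil_nat_div_spec; [apply v3norm_ge0 | nra]. Qed.

Lemma ref_n_zero (s : St) : ref_n P s = 0%nat -> vel s = v3zero.
Proof.
  intro H0. apply v3norm_eq0.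
  pose proof (ref_n_spec s) as [_ Hle]. rewrite H0 in Hle. simpl in Hle. lra.
Qed.

Lemma traj_ref_input (s : St) (i : nat) :
  traj P (ref_input P s) s i = brake P s (ref_n P s) i.
Proof.
  set (n := ref_n P s).
  assert (Hlow : forall i, (i <= n)%nat ->
            traj P (ref_input P s) s i = traj P (fun _ => brake_input P s n) s i).
  { intros i' Hi'. apply traj_ext. intros t Ht. unfold ref_input. fold n.
    now replace (t <? n)%nat with true by (symmetry; apply Nat.ltb_lt; lia). }
  unfold brake. destruct (Nat.le_gt_cases i n) as [Hin|Hni].
  - rewrite Nat.min_l by lia. now apply Hlow.
  - rewrite Nat.min_r by lia. rewrite <- Hlow by lia.
    replace i with (n + (i - n))%nat by lia. apply traj_rest.
    + intros t Ht. unfold ref_input. fold n.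
      now replace (t <? n)%nat with false by (symmetry; apply Nat.ltb_ge; lia).
    + rewrite Hlow by lia. destruct (Nat.eq_dec n 0) as [Hn|Hn].
      * rewrite Hn. now apply ref_n_zero.
      * now apply brake_stops.
Qed.

Lemma ref_input_norm_le (s : St) (t : nat) : v3norm (ref_input P s t) <= abar P.
Proof.
  unfold ref_input. set (n := ref_n P s).
  destruct (t <? n)%nat eqn:Ht; [|rewrite v3norm_zero; lra].
  apply Nat.ltb_lt in Ht. assert (Hn : 0 < INR n) by (apply lt_0_INR; lia).
  pose proof (ref_n_spec s) as [_ Hv]. fold n in Hv.
  rewrite v3norm_scale, Rabs_left
    by (apply Ropp_lt_gt_0_contravar, Rinv_0_lt_compat; nra).
  rewrite Ropp_involutive.
  apply (Rmult_le_compat_l (/ (INR n * dt P))) in Hv;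
    [|left; apply Rinv_0_lt_compat; nra].
  replace (/ (INR n * dt P) * (INR n * (abar P * dt P))) with (abar P) in Hv
    by (field; lra).
  exact Hv.
Qed.

Lemma ref_input_vel_1 (s : St) :
  v3norm (vel (traj P (ref_input P s) s 1)) <= abar P * INR (ref_n P s - 1) * dt P.
Proof.
  rewrite traj_ref_input. set (n := ref_n P s).
  destruct (Nat.eq_dec n 0) as [Hn|Hn].
  - unfold brake. rewrite Hn. simpl. rewrite ref_n_zero, v3norm_zero by exact Hn. lra.
  - unfold brake. replace (Nat.min 1 n) with 1%nat by lia. simpl traj.
    rewrite vel_dyn_brake, v3norm_scale by exact Hn.
    assert (H1 : 1 <= INR n) by (apply (le_INR 1); lia).
    rewrite Rabs_right by (apply Rle_ge, Rle_mult_inv_pos; lra).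
    pose proof (ref_n_spec s) as [_ Hv]. fold n in Hv.
    apply (Rmult_le_compat_l ((INR n - 1) / INR n)) in Hv;
      [|apply Rle_mult_inv_pos; lra].
    rewrite minus_INR by lia. simpl INR.
    replace ((INR n - 1) / INR n * (INR n * (abar P * dt P)))
      with (abar P * (INR n - 1) * dt P) in Hv by (field; lra).
    exact Hv.
Qed.

Lemma cont_ref_input (X : nat -> St) (m i : nat) : (1 <= i)%nat ->
  cont P X m (ref_n P (X m) - 1) (ref_input P (X m)) i = traj P (ref_input P (X m)) (X m) i.
Proof.
  intros Hi. rewrite cont_brake. unfold nom. rewrite !traj_ref_input.
  set (n := ref_n P (X m)). unfold brake at 2.
  destruct (Nat.eq_dec n 0) as [Hn|Hn].
  - rewrite Hn. unfold brake. now rewrite !Nat.min_0_r.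
  - replace (Nat.min 1 n) with 1%nat by lia. simpl traj.
    rewrite <- brake_succ by lia. f_equal. lia.
Qed.

Lemma ref_n_dyn_pred (s : St) (a : V3) : (1 <= ref_n P s)%nat -> v3norm a <= abar P ->
  v3norm (vel (dyn P s a)) <= abar P * INR (ref_n P s - 1) * dt P ->
  ref_n P (dyn P s a) = (ref_n P s - 1)%nat.
Proof.
  intros Hn Ha Hv.
  assert (Hv0 : vel s = v3add (vel (dyn P s a)) (v3scale (- dt P) a)).
  { unfold dyn; simpl. destruct (vel s), a; unfold v3add, v3scale; apply V3_ext; simpl; ring. }
  assert (Htri : v3norm (vel s) <= v3norm (vel (dyn P s a)) + abar P * dt P).
  { rewrite Hv0 at 1. eapply Rle_trans; [apply v3norm_add_le|].
    rewrite v3norm_scale, Rabs_left by lra. nra. }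
  unfold ref_n in *.
  apply ceil_nat_div_pred; [apply v3norm_ge0 | nra | exact Htri | exact Hn | nra].
Qed.

End Braking.

Section RecursiveFeasibility.

Variable P : Params.
Variable Sset : nat -> V3 -> Prop.
Variable J : nat -> (nat -> V3) -> (nat -> St) -> R.
Hypothesis Hp : params_ok P.

Let dt_pos : 0 < dt P := proj1 Hp.
Let abar_pos : 0 < abar P := proj1 (proj2 Hp).
Let rho_pos : 0 < rho P := proj1 (proj2 (proj2 (proj2 Hp))).
Let hor_pos : (1 <= hor P)%nat := proj1 (proj2 (proj2 (proj2 (proj2 (proj2 Hp))))).
Let Ntil_le_hor : (Ntil P <= hor P - 1)%nat := proj2 (proj2 (proj2 (proj2 (proj2 (proj2 Hp))))).

(* [n] is the [Nhat] of the FTOCP solved at [X]; validity makes it also the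
   braking length of the reference plan at [X']. *)
Definition follows_plan (X X' : nat -> St) (j : nat) : Prop :=
  exists n vb u, ftocp_wd P X j /\ ftocp_constr P Sset X j n vb u /\
    X' j = nom P X j u 1 /\ ref_n P (X' j) = n /\ (n <= Ntil P)%nat.

Lemma Nt_le_Ntil (X : nat -> St) (m : nat) :
  v3norm (vel (X m)) <= vbar P -> (Nt P X m <= Ntil P)%nat.
Proof.
  intro Hv. apply ceil_nat_le.
  - apply Rle_mult_inv_pos; [apply v3norm_ge0 | nra].
  - apply Rmult_le_compat_r; [left; apply Rinv_0_lt_compat; nra | exact Hv].
Qed.

Lemma follows_plan_Nt_le (X X' : nat -> St) (m : nat) :
  follows_plan X X' m -> (Nt P X' m <= Ntil P)%nat.
Proof.
  intros (n & vb & u & _ & _ & _ & Hn & HnN).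
  change (Nt P X' m) with (ref_n P (X' m)). now rewrite Hn.
Qed.

Lemma cont_min (X : nat -> St) (j n : nat) (u : nat -> V3) (i : nat) : (1 <= i)%nat ->
  cont P X j n u i = cont P X j n u (Nat.min i (n + 1)).
Proof. intro Hi. rewrite !cont_brake. unfold brake. f_equal. lia. Qed.

Lemma cont_in_Sset (X : nat -> St) (j n : nat) (vb : option R) (u : nat -> V3) (i : nat) :
  ftocp_constr P Sset X j n vb u -> (1 <= i)%nat -> Sset j (Defs.pos (cont P X j n u i)).
Proof.
  intros (_ & Hnom & Hcont & _) Hi. rewrite cont_min by exact Hi.
  destruct (Nat.eq_dec (Nat.min i (n + 1)) 1) as [->|Hi1].
  - exact (Hnom 1%nat ltac:(lia)).
  - apply Hcont. lia.
Qed.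

Lemma ref_traj_next (X X' : nat -> St) (j n : nat) (u : nat -> V3) :
  X' j = nom P X j u 1 -> ref_n P (X' j) = n ->
  forall i, traj P (ref_input P (X' j)) (X' j) i = cont P X j n u (S i).
Proof.
  intros HX Hn i. rewrite traj_ref_input by assumption.
  rewrite Hn, cont_brake, <- HX. f_equal. lia.
Qed.

Lemma next_refs_separated (X X' : nat -> St) (j m i : nat) :
  follows_plan X X' j -> follows_plan X X' m ->
  (j < nagents P)%nat -> (m < nagents P)%nat -> j <> m -> (1 <= i <= hor P)%nat ->
  2 * rho P <= dist_jm P (X' j) (X' m) i.
Proof.
  intros (nj & vbj & uj & _ & Cj & Xj & Rj & Nj) (nm & vbm & um & Wm & Cm & Xm & Rm & Nm)
    Hj Hm Hjm Hi.
  unfold dist_jm, ref_pos.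
  rewrite (ref_traj_next X X' j nj uj Xj Rj), (ref_traj_next X X' m nm um Xm Rm).
  (* beyond the horizon the contingency plans have already stopped *)
  set (i1 := Nat.min (S i) (hor P)).
  assert (Ecap : forall k n u, (n <= Ntil P)%nat ->
            cont P X k n u (S i) = cont P X k n u i1).
  { intros k n u Hn. rewrite cont_min, (cont_min X k n u i1) by (unfold i1; lia).
    f_equal. unfold i1. lia. }
  rewrite (Ecap j nj uj Nj), (Ecap m nm um Nm).
  destruct Cj as (_ & _ & _ & CAj & _), Cm as (_ & _ & _ & CAm & _).
  apply (halfspaces_separate (ref_pos P (X j) i1) (ref_pos P (X m) i1)).
  - apply Wm; unfold i1; lia.
  - apply CAm; unfold i1; lia.
  - apply CAj; unfold i1; lia.
Qed.

Lemma stepC_ref_feasible (X X' : nat -> St) (m : nat) :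
  (forall j, (j < nagents P)%nat -> follows_plan X X' j) -> (m < nagents P)%nat ->
  ftocp_feasible P Sset X' m (Nt P X' m - 1) (Some (abar P * INR (Nt P X' m - 1) * dt P)).
Proof.
  intros Hplans Hm.
  assert (Hsep : forall j i, (j < nagents P)%nat -> j <> m -> (1 <= i <= hor P)%nat ->
            2 * rho P <= dist_jm P (X' j) (X' m) i)
    by (intros; apply (next_refs_separated X); auto).
  assert (Href_S : forall i, (1 <= i)%nat ->
            Sset m (Defs.pos (traj P (ref_input P (X' m)) (X' m) i))).
  { destruct (Hplans m Hm) as (n & vb & u & _ & C & HX & Hn & _). intros i Hi.
    rewrite (ref_traj_next X X' m n u HX Hn). apply (cont_in_Sset X m n vb); [exact C | lia]. }
  split.
  { intros j i Hj Hjm Hi. pose proof (Hsep j i Hj Hjm Hi). lra. }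
  exists (ref_input P (X' m)).
  change (Nt P X' m) with (ref_n P (X' m)).
  split; [|split; [|split; [|split]]].
  - intros i _. now apply ref_input_norm_le.
  - intros i Hi. apply Href_S. lia.
  - intros i Hi. rewrite cont_ref_input by (auto; lia). apply Href_S. lia.
  - intros j i Hj Hjm Hi. rewrite cont_ref_input by (auto; lia).
    pose proof (Hsep j i Hj Hjm Hi). unfold ca_constraint. cbv zeta.
    change (Defs.pos (traj P (ref_input P (X' m)) (X' m) i)) with (ref_pos P (X' m) i).
    unfold dist_jm in *. lra.
  - now apply ref_input_vel_1.
Qed.

Lemma optimal_follows_plan (X X' : nat -> St) (j n : nat) (vb : option R) (u : nat -> V3) :
  ftocp_optimal P Sset J X j n vb u -> valid P X j n u -> (n <= Ntil P)%nat ->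
  X' j = dyn P (X j) (u 0%nat) -> follows_plan X X' j.
Proof.
  intros (Hwd & Hc & _) Hvalid HnN HX.
  exists n, vb, u. rewrite HX. exact (conj Hwd (conj Hc (conj eq_refl (conj Hvalid HnN)))).
Qed.

Lemma cmc_applies_follows_plan (X X' : nat -> St) (j : nat) (sl : Step -> nat -> V3) (a0 : V3) :
  solver_ok P Sset J X j sl -> (Nt P X j <= Ntil P)%nat -> cmc_applies P Sset X j sl a0 ->
  X' j = dyn P (X j) a0 -> follows_plan X X' j.
Proof.
  intros (SA & SB & SC) HN Happ HX.
  destruct Happ as [((Hlt & Hf & Hv) & ->) | [((_ & Hf & Hv) & ->) | ((_ & _ & Hn1 & Hf) & ->)]].
  - apply (optimal_follows_plan X X' j _ _ _ (SA Hlt Hf) Hv); [simpl; lia | exact HX].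
  - apply (optimal_follows_plan X X' j _ _ _ (SB Hf) Hv); [simpl; lia | exact HX].
  - pose proof (SC Hn1 Hf) as Hopt.
    apply (optimal_follows_plan X X' j _ _ _ Hopt); [|simpl; lia | exact HX].
    (* validity is not checked in step (c): it holds since one step changes
       the speed by at most [abar dt] *)
    destruct Hopt as (_ & (Hu & _ & _ & _ & Hvb) & _). simpl in Hvb.
    apply (ref_n_dyn_pred P dt_pos abar_pos); [exact Hn1 | apply Hu; lia | exact Hvb].
Qed.

Lemma cmc_succeeds_of_stepC_feasible (X : nat -> St) (m : nat) (sl : Step -> nat -> V3) :
  solver_ok P Sset J X m sl ->
  ftocp_feasible P Sset X m (Nt P X m - 1) (Some (abar P * INR (Nt P X m - 1) * dt P)) ->
  cmc_succeeds P Sset X m sl.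
Proof.
  intros (_ & SB & _) Hf.
  destruct (classic (caseA P Sset X m sl)) as [HA|HnA].
  { exists (sl StepA 0%nat). now left. }
  destruct (classic (caseB P Sset X m sl)) as [HB|HnB].
  { exists (sl StepB 0%nat). now right; left. }
  destruct (Nat.eq_dec (Nt P X m) 0) as [E|E].
  - (* without step (c), step (b) solves the same problem, with bound [0] on
       the speed, so its solution is valid *)
    exfalso. apply HnB.
    assert (HfB : step_feasible P Sset X m StepB)
      by (unfold step_feasible, step_Nhat, step_vb; rewrite E in *; exact Hf).
    split; [exact HnA | split; [exact HfB|]].
    destruct (SB HfB) as (_ & (_ & _ & _ & _ & Hvb) & _).
    unfold valid, step_Nhat, step_vb in *. rewrite E in *. simpl INR in Hvb.
    apply ceil_nat_div_unique; [nra|].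
    pose proof (v3norm_ge0 (vel (nom P X m (sl StepB) 1))). simpl INR. nra.
  - exists (sl StepC 0%nat). right; right.
    split; [|reflexivity]. refine (conj HnA (conj HnB (conj _ Hf))). lia.
Qed.

End RecursiveFeasibility.

Theorem theorem1 (P : Params) (Sset : nat -> V3 -> Prop)
  (J : nat -> (nat -> V3) -> (nat -> St) -> R)
  (s : nat -> nat -> St) (sel : nat -> nat -> Step -> nat -> V3) :
  params_ok P ->
  (forall m, (m < nagents P)%nat -> v3norm (vel (s 0%nat m)) <= vbar P) ->
  (forall k m, (m < nagents P)%nat -> solver_ok P Sset J (s k) m (sel m k)) ->
  (forall k m a0, (m < nagents P)%nat -> cmc_applies P Sset (s k) m (sel m k) a0 ->
     s (S k) m = dyn P (s k m) a0) ->
  (forall m, (m < nagents P)%nat -> cmc_succeeds P Sset (s 0%nat) m (sel m 0%nat)) ->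
  forall k m, (m < nagents P)%nat -> cmc_succeeds P Sset (s k) m (sel m k).
Proof.
  intros Hp Hv0 Hsol Hdyn Hsucc0.
  (* [Nt <= Ntil] keeps every contingency plan inside the horizon. *)
  assert (Inv : forall k m, (m < nagents P)%nat ->
            cmc_succeeds P Sset (s k) m (sel m k) /\ (Nt P (s k) m <= Ntil P)%nat).
  { induction k as [|k IH]; intros m Hm.
    - split; [now apply Hsucc0 | now apply (Nt_le_Ntil P Hp), Hv0].
    - assert (Hplans : forall j, (j < nagents P)%nat -> follows_plan P Sset (s k) (s (S k)) j).
      { intros j Hj. destruct (IH j Hj) as [[a0 Happ] HN].
        apply (cmc_applies_follows_plan P Sset J Hp (s k) (s (S k)) j (sel j k) a0);
          auto. }
      split.
      + apply (cmc_succeeds_of_stepC_feasible P Sset J Hp); [now apply Hsol|].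
        now apply (stepC_ref_feasible P Sset Hp (s k)).
      + now apply (follows_plan_Nt_le P Sset (s k)), Hplans. }
  intros k m Hm. now apply Inv.
Qed.
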